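(* Let $C \subseteq \mathbb{R}^n$ be a nonempty closed convex set, let $\mathcal{H}$ be a hyperplane arrangement in $\mathbb{R}^n$, let $x \in \mathbb{R}^n$, and let $\delta$ be a convex distance function to $x$. Let $A$ be a pattern such that $R_A$ contains a point of $\operatorname{argmin}_{v \in C} \delta(v)$, and let $A'$ be a pattern with $R_{A'} \cap C \neq \emptyset$. Then there is a sequence of patterns $A = A^1, A^2, \dots, A^{k}, A^{k+1} = A'$ such that: (i) $A^i$ and $A^{i+1}$ are neighbors for all $i \in [k]$; (ii) $\operatorname{dist}(R_{A^i} \cap C) \le \operatorname{dist}(R_{A^{i+1}} \cap C)$ for all $i \in [k]$; (iii) $R_{A^i} \cap C \neq \emptyset$ for all $i \in [k+1]$.
   Context: A hyperplane is a set $\{v : a^\top v = b\}$ with $a \in \mathbb{R}^n\setminus\{0\}$, $b \in \mathbb{R}$; its halfspaces are $H^{\le} = \{v : a^\top v \le b\}$ and $H^{\ge} = \{v : a^\top v \ge b\}$. A hyperplane arrangement $\mathcal{H}$ is a finite set of hyperplanes, each with a fixed representation $(a,b)$. A pattern is a function $P : \mathcal{H} \to \{-1,1\}$, and its region is the closed polyhedron $R_P := \bigcap_{P(H)=-1} H^{\le} \cap \bigcap_{P(H)=1} H^{\ge}$. Two patterns are neighbors if they differ on exactly one hyperplane. A convex distance function to $x$ is a convex, continuous function $\delta : \mathbb{R}^n \to [0,\infty)$ with bounded sublevel sets and $\delta(x)=0$ (e.g. $\delta(v) = \|v - x\|_p$, $p \ge 1$); for a nonempty closed set $S$, $\operatorname{dist}(S)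 := \min_{v \in S} \delta(v)$. $[k] = \{1,\dots,k\}$. *)

From HB Require Import structures.
From mathcomp Require Import all_boot all_order all_algebra.
From mathcomp Require Import all_classical all_reals all_analysis.
Set Implicit Arguments. Unset Strict Implicit. Unset Printing Implicit Defensive.
Import Order.TTheory GRing.Theory Num.Theory.
Import numFieldNormedType.Exports.
Local Open Scope classical_set_scope.
Local Open Scope ring_scope.

Definition dotv {R : realType} {n : nat} (a v : 'rV[R]_n) : R :=
  \sum_(j < n) a ord0 j * v ord0 j.

Definition hyperplane {R : realType} {n : nat} (a : 'rV[R]_n) (b : R) : set 'rV[R]_n :=
  [set v | dotv a v = b].

Definition arrangement {R : realType} {n m : nat}
    (a : 'I_m -> 'rV[R]_n) (b : 'I_m -> R) : Prop :=
  (forall i, a i != 0) /\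
  (forall i j, hyperplane (a i) (b i) = hyperplane (a j) (b j) -> i = j).

(* A pattern P : H -> {-1,1} is encoded as a function 'I_m -> bool,
   with [true] meaning +1 and [false] meaning -1. *)
Definition pattern (m : nat) := 'I_m -> bool.

Definition region {R : realType} {n m : nat}
    (a : 'I_m -> 'rV[R]_n) (b : 'I_m -> R) (P : pattern m) : set 'rV[R]_n :=
  [set v | forall i, if P i then b i <= dotv (a i) v else dotv (a i) v <= b i].

Definition neighbors {m : nat} (P Q : pattern m) : Prop :=
  #|[pred i | P i != Q i]| = 1%N.

Definition convex_set_of {R : realType} {n : nat} (C : set 'rV[R]_n) : Prop :=
  forall u v (t : R), C u -> C v -> 0 <= t -> t <= 1 ->
    C (t *: u + (1 - t) *: v).

Definition convex_fun_of {R : realType} {n : nat} (f : 'rV[R]_n -> R) : Prop :=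
  forall u v (t : R), 0 <= t -> t <= 1 ->
    f (t *: u + (1 - t) *: v) <= t * f u + (1 - t) * f v.

Definition convex_distance {R : realType} {n : nat}
    (delta : 'rV[R]_n -> R) (x : 'rV[R]_n) : Prop :=
  [/\ convex_fun_of delta, continuous delta,
      (forall v, 0 <= delta v),
      (forall c : R, bounded_set [set v | delta v <= c]) &
      delta x = 0].

(* dist(S) = min_{v in S} delta v; for the nonempty closed sets considered
   the minimum exists, so it coincides with the infimum used here. *)
Definition dist {R : realType} {n : nat} (delta : 'rV[R]_n -> R)
    (S : set 'rV[R]_n) : R := inf [set delta v | v in S].

Definition argmin_on {R : realType} {n : nat} (delta : 'rV[R]_n -> R)
    (C : set 'rV[R]_n) : set 'rV[R]_n :=
  [set v | C v /\ forall w, C w -> delta v <= delta w].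

From HB Require Import structures.
From mathcomp Require Import all_boot all_order all_algebra.
From mathcomp Require Import all_classical all_reals all_analysis.
From mathcomp Require Import ring lra.
Set Implicit Arguments. Unset Strict Implicit. Unset Printing Implicit Defensive.
Import Order.TTheory GRing.Theory Num.Theory.
Import numFieldNormedType.Exports.
Local Open Scope classical_set_scope.
Local Open Scope ring_scope.

(* Fix a minimiser z of delta on C lying in R_A.  We build the
   walk backwards from A' by induction on the number of hyperplanes on which
   the current pattern B disagrees with A.  For any w in R_B ∩ C, walk along
   the segment from w towards z: the first hyperplane H_i with B i <> A i that
   the segment meets yields a point p of R_{flip B i} ∩ C (convexity of C),
   and delta p <= delta w because delta is convex and delta z <= delta w.
   Choosing, among the finitely many such i, one minimising
   dist(R_{flip B i} ∩ C), we get a neighbour of B that is one step closer to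
   A, meets C, and satisfies dist(R_{flip B i} ∩ C) <= dist(R_B ∩ C). *)

Lemma crossing_time (R : realFieldType) (g0 g1 : R) :
  0 <= g0 -> g1 <= 0 ->
  let T := g0 / (g0 - g1) in
  [/\ 0 <= T <= 1, T * g1 + (1 - T) * g0 = 0 &
      forall t, 0 <= t -> t <= T -> 0 <= t * g1 + (1 - t) * g0].
Proof.
move=> g0_ge0 g1_le0 T.
have affine t : t * g1 + (1 - t) * g0 = g0 - t * (g0 - g1) by ring.
have [d0|d_neq0] := eqVneq (g0 - g1) 0.
  have g0_0 : g0 = 0 by lra.
  rewrite /T d0 invr0 mulr0 lexx ler01; split => // [|t _ _];
    by rewrite affine d0 mulr0 g0_0 subr0.
have d_gt0 : 0 < g0 - g1 by rewrite lt_def d_neq0 /=; lra.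
split.
- by rewrite /T divr_ge0 ?(ltW d_gt0) //= ler_pdivrMr // mul1r; lra.
- by rewrite affine /T -mulrA mulVf // mulr1 subrr.
- by move=> t _ tT; rewrite affine subr_ge0 -ler_pdivlMr.
Qed.

Section Regions.
Variables (R : realType) (n m : nat) (a : 'I_m -> 'rV[R]_n) (b : 'I_m -> R).

Lemma dotv_comb (c u v : 'rV[R]_n) (t : R) :
  dotv c (t *: u + (1 - t) *: v) = t * dotv c u + (1 - t) * dotv c v.
Proof.
rewrite /dotv !mulr_sumr -big_split /=; apply: eq_bigr => j _.
by rewrite !mxE; ring.
Qed.

Definition slack (B : pattern m) (j : 'I_m) (v : 'rV[R]_n) : R :=
  if B j then dotv (a j) v - b j else b j - dotv (a j) v.

Lemma slack_comb B j u v t :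
  slack B j (t *: u + (1 - t) *: v) = t * slack B j u + (1 - t) * slack B j v.
Proof. by rewrite /slack dotv_comb; case: (B j); ring. Qed.

Lemma regionE (B : pattern m) v :
  region a b B v <-> forall j, 0 <= slack B j v.
Proof.
by split=> h j; have := h j; rewrite /slack; case: (B j); rewrite subr_ge0.
Qed.

Lemma slack_le0 (A B : pattern m) j v :
  region a b A v -> B j != A j -> slack B j v <= 0.
Proof.
move=> /(_ j); rewrite /slack.
by case: (B j); case: (A j) => //= h _; rewrite subr_le0.
Qed.

Definition flip (B : pattern m) (i : 'I_m) : pattern m :=
  fun j => if j == i then ~~ B j else B j.

Lemma slack_flip_at (B : pattern m) i v : slack (flip B i) i v = - slack B i v.
Proof. by rewrite /slack /flip eqxx; case: (B i) => /=; rewrite opprB. Qed.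

Lemma slack_flip_off (B : pattern m) i j v :
  j != i -> slack (flip B i) j v = slack B j v.
Proof. by move=> j_neq_i; rewrite /slack /flip (negPf j_neq_i). Qed.

Lemma neighbors_flip (B : pattern m) i : neighbors (flip B i) B.
Proof.
rewrite /neighbors -(card1 i); apply: eq_card => j; rewrite !inE /flip.
by have [->|] := eqVneq j i; [case: (B i) | rewrite eqxx].
Qed.

(* Crossing lemma: moving from w in R_B towards a point z lying on the
   non-B side of every hyperplane of a nonempty family D (and on the B side
   of the others), one first meets some H_i, i in D, at a point of
   R_{flip B i}. *)
Lemma first_crossing (B : pattern m) (D : pred 'I_m) (w z : 'rV[R]_n) i1 :
  D i1 -> region a b B w ->
  (forall j, D j -> slack B j z <= 0) ->
  (forall j, ~~ D j -> 0 <= slack B j z) ->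
  exists i t, [/\ D i, 0 <= t <= 1 & region a b (flip B i) (t *: z + (1 - t) *: w)].
Proof.
move=> Di1 /regionE w_in z_out z_in.
pose T j := slack B j w / (slack B j w - slack B j z).
have [i /= Di Tmin] := @arg_minP _ R _ i1 D T Di1.
have [t01 cross_i _] := crossing_time (w_in i) (z_out i Di).
exists i, (T i); split=> //; apply/regionE => j; rewrite slack_comb.
have [->|j_neq_i] := eqVneq j i.
  by rewrite !slack_flip_at !mulrN -opprD cross_i oppr0.
rewrite !slack_flip_off //.
have [Dj|nDj] := boolP (D j).
  have [_ _ before] := crossing_time (w_in j) (z_out j Dj).
  by apply: before (Tmin j Dj); case/andP: t01.
case/andP: t01 => t0 t1.
by rewrite addr_ge0 // mulr_ge0 // ?subr_ge0 // z_in.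
Qed.

End Regions.

Definition disagree {m : nat} (A B : pattern m) : nat := #|[pred j | B j != A j]|.

Lemma disagree0 {m : nat} (A B : pattern m) : disagree A B = 0%N -> B = A.
Proof.
by move=> /card0_eq B_A; apply/funext => j; have /negbFE/eqP := B_A j.
Qed.

Lemma disagree_flip {m : nat} (A B : pattern m) i :
  B i != A i -> disagree A B = (disagree A (flip B i)).+1.
Proof.
move=> BAi; rewrite /disagree (cardD1 i) inE BAi add1n; congr _.+1.
apply: eq_card => j; rewrite !inE /flip.
by have [->|] := eqVneq j i; [by case: (B i) (A i) BAi => -[] | ].
Qed.

Section Descent.
Variables (R : realType) (n m : nat) (a : 'I_m -> 'rV[R]_n) (b : 'I_m -> R).
Variables (C : set 'rV[R]_n) (delta : 'rV[R]_n -> R) (A : pattern m).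
Hypotheses (C_convex : convex_set_of C) (delta_convex : convex_fun_of delta).
Hypothesis delta_ge0 : forall v, 0 <= delta v.
Variable z : 'rV[R]_n.
Hypotheses (z_in_A : region a b A z) (Cz : C z).
Hypothesis z_min : forall w, C w -> delta z <= delta w.

Local Notation cell B := (region a b B `&` C).
Lemma dist_le (S : set 'rV[R]_n) v : S v -> dist delta S <= delta v.
Proof.
move=> Sv; apply: ge_inf; last by exists v.
by exists 0 => _ [u _ <-]; exact: delta_ge0.
Qed.

Lemma dist_ge (S : set 'rV[R]_n) c :
  S !=set0 -> (forall v, S v -> c <= delta v) -> c <= dist delta S.
Proof.
move=> [v Sv] c_lb; apply: lb_le_inf; first by exists (delta v), v.
by move=> _ [u Su <-]; exact: c_lb.
Qed.

Lemma flip_toward_min (B : pattern m) i1 w :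
  B i1 != A i1 -> cell B w ->
  exists i, B i != A i /\ exists p, cell (flip B i) p /\ delta p <= delta w.
Proof.
move=> BAi1 [Bw Cw].
have z_out j : B j != A j -> slack a b B j z <= 0 by apply: slack_le0.
have z_in j : ~~ (B j != A j) -> 0 <= slack a b B j z.
  by rewrite negbK => /eqP BAj; move/regionE: z_in_A => /(_ j); rewrite /slack BAj.
have [i [t [BAi /andP[t0 t1] cross]]] :=
  first_crossing (D := [pred j | B j != A j]) BAi1 Bw z_out z_in.
exists i; split=> //; exists (t *: z + (1 - t) *: w); split; first split=> //.
  exact: C_convex.
apply: le_trans (delta_convex _ _ t0 t1) _.
by have := ler_wpM2l t0 (z_min Cw); lra.
Qed.

Lemma descent_step (B : pattern m) i1 :
  B i1 != A i1 -> cell B !=set0 ->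
  exists i, [/\ B i != A i, cell (flip B i) !=set0 &
                dist delta (cell (flip B i)) <= dist delta (cell B)].
Proof.
move=> BAi1 [w0 Bw0].
pose feasible := [pred i | (B i != A i) && `[< cell (flip B i) !=set0 >]].
have [i [BAi [p [Bp _]]]] := flip_toward_min BAi1 Bw0.
have feasible_i : feasible i by rewrite /= BAi; apply/asboolP; exists p.
have [i0 /= /andP[BAi0 /asboolP ne_i0] i0_min] :=
  @arg_minP _ R _ i feasible (fun i => dist delta (cell (flip B i))) feasible_i.
exists i0; split=> //; apply: dist_ge; first by exists w0.
move=> v Bv; have [j [BAj [q [Bq dq]]]] := flip_toward_min BAi1 Bv.
have feasible_j : feasible j by rewrite /= BAj; apply/asboolP; exists q.
by apply: le_trans (i0_min j feasible_j) _; apply: le_trans dq; exact: dist_le.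
Qed.

Definition descending_walk (B : pattern m) (k : nat) (s : nat -> pattern m) : Prop :=
  [/\ s 0%N = A, s k = B,
      (forall i, (i < k)%N -> neighbors (s i) (s i.+1)),
      (forall i, (i < k)%N ->
         dist delta (cell (s i)) <= dist delta (cell (s i.+1))) &
      (forall i, (i <= k)%N -> cell (s i) !=set0)].

Lemma walk_snoc (B' B : pattern m) k s :
  descending_walk B' k s -> neighbors B' B ->
  dist delta (cell B') <= dist delta (cell B) -> cell B !=set0 ->
  descending_walk B k.+1 (fun i => if (i <= k)%N then s i else B).
Proof.
move=> [s0 sk s_nb s_dist s_ne] nb d_le B_ne; split=> /= [||i|i|i].
- exact: s0.
- by rewrite ltnn.
- rewrite ltnS; case: (ltngtP i k) => // [ik _|-> _]; first exact: s_nb.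
  by rewrite sk.
- rewrite ltnS; case: (ltngtP i k) => // [ik _|-> _]; first exact: s_dist.
  by rewrite sk.
- by case: (leqP i k) => [ik _|_ _]; [exact: s_ne | exact: B_ne].
Qed.

Lemma descending_walk_exists (B : pattern m) :
  cell B !=set0 -> exists k s, descending_walk B k s.
Proof.
move dB: (disagree A B) => d; elim: d B dB => [|d IH] B dB B_ne.
  move/disagree0: dB B_ne => -> A_ne.
  by exists 0%N, (fun=> A); split.
have /card_gt0P [i1 BAi1] : (0 < disagree A B)%N by rewrite dB.
have [i [BAi ne_flip d_flip]] := descent_step BAi1 B_ne.
have d_B' : disagree A (flip B i) = d by move: dB; rewrite (disagree_flip BAi) => -[].
have [k [s walk]] := IH _ d_B' ne_flip.
exists k.+1; eexists; exact: (walk_snoc walk (neighbors_flip B i) d_flip B_ne).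
Qed.

End Descent.

Theorem mainTheorem4 (R : realType) (n m : nat)
    (C : set 'rV[R]_n) (a : 'I_m -> 'rV[R]_n) (b : 'I_m -> R)
    (x : 'rV[R]_n) (delta : 'rV[R]_n -> R) (A A' : pattern m) :
  C !=set0 -> closed C -> convex_set_of C ->
  arrangement a b ->
  convex_distance delta x ->
  (region a b A `&` argmin_on delta C) !=set0 ->
  (region a b A' `&` C) !=set0 ->
  exists (k : nat) (s : nat -> pattern m),
    [/\ s 0%N = A, s k = A',
        (forall i, (i < k)%N -> neighbors (s i) (s i.+1)),
        (forall i, (i < k)%N ->
           dist delta (region a b (s i) `&` C) <=
           dist delta (region a b (s i.+1) `&` C)) &
        (forall i, (i <= k)%N -> (region a b (s i) `&` C) !=set0)].
Proof.
move=> _ _ C_convex _ [delta_convex _ delta_ge0 _ _] [z [z_in_A [Cz z_min]]] A'_ne.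
exact: (descending_walk_exists C_convex delta_convex delta_ge0 z_in_A Cz z_min A'_ne).
Qed.
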